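(* Let $y\in\mathbb{R}$, $\beta>0$, and let $f$ be a function that is ordinal decreasing on $D=(y,y+\beta)$ and satisfies $f(x)>0$ for all $x\in D$. Then there exists $\varepsilon$ with $0<\varepsilon<\beta$ such that $x-f(x)<y$ for every $x$ with $y<x<y+\varepsilon$.
   Context: For $h:D\to\mathbb{R}$, a strictly decreasing sequence $x_1>x_2>\cdots$ in $D$ is $h$-bad if $h(x_1)>h(x_2)>\cdots$; $h$ is ordinal decreasing on $D$ if there is no infinite $h$-bad sequence in $D$. *)

From Stdlib Require Import Reals.
Open Scope R_scope.

Definition bad_seq (h : R -> R) (D : R -> Prop) (s : nat -> R) : Prop :=
  (forall n, D (s n)) /\
  (forall n, s (S n) < s n) /\
  (forall n, h (s (S n)) < h (s n)).

Definition ordinal_decreasing (h : R -> R) (D : R -> Prop) : Prop :=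
  ~ (exists s : nat -> R, bad_seq h D s).

(* If the conclusion failed, points x arbitrarily close to y on the right
   would satisfy f x <= x - y.  Starting from one of them, pick the next one
   below y + min (x - y) (f x): it lies to the left of x and, since
   f x' <= x' - y < f x, has a smaller value of f.  Iterating gives an
   infinite f-bad sequence. *)
From Stdlib Require Import Reals Lra Classical ClassicalEpsilon.
Open Scope R_scope.

Section Descent.

Variables (h : R -> R) (D P : R -> Prop).

Hypothesis P_sub_D : forall x, P x -> D x.
Hypothesis P_descent : forall x, P x -> exists x', P x' /\ x' < x /\ h x' < h x.

Lemma bad_seq_of_descent x0 : P x0 -> exists s, bad_seq h D s.
Proof.
  intros Px0.
  assert (next_spec : forall u : {x | P x},
             {v : {x | P x} | proj1_sig v < proj1_sig u /\
                              h (proj1_sig v) < h (proj1_sig u)}).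
  { intros [x Px]; apply constructive_indefinite_description.
    destruct (P_descent x Px) as (x' & Px' & lt_x & lt_h).
    now exists (exist _ x' Px'). }
  set (next u := proj1_sig (next_spec u)).
  set (s n := proj1_sig (Nat.iter n next (exist _ x0 Px0))).
  exists s; split; [| split]; intros n.
  - apply P_sub_D, proj2_sig.
  - exact (proj1 (proj2_sig (next_spec _))).
  - exact (proj2 (proj2_sig (next_spec _))).
Qed.

Lemma ordinal_decreasing_no_descent x0 : ordinal_decreasing h D -> ~ P x0.
Proof. intros Hod Px0; apply Hod, (bad_seq_of_descent x0 Px0). Qed.

End Descent.

Section RightNeighbourhood.

Variables (y beta : R) (f : R -> R).

Hypothesis f_pos : forall x, y < x < y + beta -> 0 < f x.

Definition step_not_below x := y < x < y + beta /\ y <= x - f x.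

Lemma step_not_below_descent :
  (forall eps, 0 < eps < beta -> exists x, y < x < y + eps /\ y <= x - f x) ->
  forall x, step_not_below x ->
  exists x', step_not_below x' /\ x' < x /\ f x' < f x.
Proof.
  intros frequent x [Dx le_y].
  pose proof (f_pos x Dx).
  pose proof (Rmin_l (x - y) (f x)); pose proof (Rmin_r (x - y) (f x)).
  assert (0 < Rmin (x - y) (f x)) by (apply Rmin_glb_lt; lra).
  destruct (frequent (Rmin (x - y) (f x))) as (x' & Dx' & le_y'); [lra |].
  exists x'; repeat split; lra.
Qed.

End RightNeighbourhood.

Theorem lemma5 (y beta : R) (f : R -> R) :
  0 < beta ->
  ordinal_decreasing f (fun x => y < x < y + beta) ->
  (forall x, y < x < y + beta -> 0 < f x) ->
  exists eps, 0 < eps < beta /\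
    forall x, y < x < y + eps -> x - f x < y.
Proof.
  intros beta_pos Hod f_pos.
  apply NNPP; intros no_eps.
  assert (frequent : forall eps, 0 < eps < beta ->
            exists x, y < x < y + eps /\ y <= x - f x).
  { intros eps eps_bd; apply NNPP; intros none.
    apply no_eps; exists eps; split; [exact eps_bd |].
    intros x Dx; apply Rnot_le_lt; intros le_y.
    now apply none; exists x. }
  destruct (frequent (beta / 2)) as (x0 & Dx0 & le_y0); [lra |].
  assert (Px0 : step_not_below y beta f x0) by (split; [lra | exact le_y0]).
  refine (ordinal_decreasing_no_descent f _ _ _ _ x0 Hod Px0).
  - now intros x [].
  - now apply step_not_below_descent.
Qed.
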